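(* For any graph $G$, any vertex $v\in V(G)$, any integer $k\ge 2$ and any integer $r\ge 3$, $$R_r(\mathcal{B}(G),k)\le R(\mathcal{G}^*(v),k)+r-2.$$
   Context: For a graph $G$, a hypergraph $H$ is a Berge-$G$ hypergraph if there are an injective map $\phi:V(G)\to V(H)$ and pairwise distinct hyperedges $e_{xy}\in E(H)$, one for each $xy\in E(G)$, with $\phi(x),\phi(y)\in e_{xy}$. $\mathcal{B}(G)$ denotes the family of all Berge-$G$ hypergraphs. $K_n^r$ denotes the complete $r$-uniform hypergraph on $n$ vertices. For a family $\mathcal{H}$ of $r$-uniform hypergraphs and integers $k\ge 2$, $r\ge 2$, $R_r(\mathcal{H},k)$ is the smallest $n$ such that every $k$-coloring of the hyperedges of $K_n^r$ contains a monochromatic subhypergraph belonging to $\mathcal{H}$. For a family $\mathcal{G}$ of graphs, $R(\mathcal{G},k)$ is the smallest $n$ such that every $k$-coloring of the edges of the complete graph $K_n$ contains a monochromatic subgraph isomorphic to some member of $\mathcal{G}$. For a graph $G$ and $v\in V(G)$ with neighborhood $N(v)=\{q_1,\dots,q_t\}$, let $G'=G-v$. An extension of $G-v$ is any graph obtained from $G'$ by adding, for each $i=1,\dots,t$, an edge $q_ir_i$ not belonging to $G'$, where each $r_i$ is either a vertex of $G'$ or a new vertex not in $G'$ (new vertices may be shared by several $r_i$), and the $t$ added edges are pairwise distinct. $\mathcal{G}^*(v)$ denotes the family of all such extensions (it contains $G$ itself). *)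

From mathcomp Require Import all_boot.
Set Implicit Arguments. Unset Strict Implicit. Unset Printing Implicit Defensive.

(* A (finite simple) graph G is a type T : finType of vertices with a
   symmetric irreflexive adjacency relation e : rel T.
   Colourings of the edges of K_n (resp. hyperedges of K_n^r) with k colours
   are functions c : {set 'I_n} -> 'I_k; only their values on 2-sets
   [set x; y] (resp. r-sets) matter. *)

Definition upair_eq (V : Type) (a b c d : V) : Prop :=
  (a = c /\ b = d) \/ (a = d /\ b = c).

(* (F, f) is (isomorphic to) an extension of G - v, i.e. a member of
   G^*(v).  iota embeds V(G') = V(G) \ {v} into F; for each neighbour q of v,
   r q is the other endpoint of the added edge q r_q. *)
Definition is_extension (T : finType) (e : rel T) (v : T)
    (F : finType) (f : rel F) : Prop :=
  exists (iota : T -> F) (r : T -> F),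
    {in [pred x | x != v] &, injective iota} /\
    (forall a : F, (exists2 x, x != v & a = iota x) \/ (exists2 q, e v q & a = r q)) /\
    (forall q, e v q -> r q <> iota q) /\
    (forall q, e v q -> ~ exists y, [/\ y != v, e q y & r q = iota y]) /\
    (forall q q', e v q -> e v q' -> q <> q' ->
        ~ upair_eq (iota q) (r q) (iota q') (r q')) /\
    (forall a b : F, f a b <->
       ((exists x y, [/\ x != v, y != v, e x y & upair_eq a b (iota x) (iota y)]) \/
        (exists2 q, e v q & upair_eq a b (iota q) (r q)))).

(* Graph Ramsey property: every k-colouring of E(K_n) has a monochromatic
   subgraph isomorphic to a member of G^*(v).  R(G^*(v),k) is the least such n. *)
Definition ramsey_ext_prop (T : finType) (e : rel T) (v : T) (k n : nat) : Prop :=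
  forall c : {set 'I_n} -> 'I_k, exists col : 'I_k,
    exists (F : finType) (f : rel F), is_extension e v f /\
      exists phi : F -> 'I_n, injective phi /\
        forall a b, f a b -> c [set phi a; phi b] = col.

(* H (a hypergraph on vertex set V, given by its edge set) is a Berge-G
   hypergraph: injective phi : V(G) -> V, and pairwise distinct hyperedges
   E x y (one per edge xy of G, indexed by one of its orientations). *)
Definition is_berge (T : finType) (e : rel T) (V : finType)
    (H : {set {set V}}) : Prop :=
  exists (phi : T -> V) (E : T -> T -> {set V}),
    injective phi /\
    (forall x y, e x y -> [/\ E x y \in H, phi x \in E x y & phi y \in E x y]) /\
    (forall x y x' y', e x y -> e x' y' -> E x y = E x' y' -> upair_eq x y x' y').

(* Hypergraph Ramsey property: every k-colouring of E(K_n^r) has a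
   monochromatic Berge-G subhypergraph.  R_r(B(G),k) is the least such n. *)
Definition ramsey_berge_prop (T : finType) (e : rel T) (r k n : nat) : Prop :=
  forall c : {set 'I_n} -> 'I_k, exists col : 'I_k,
    is_berge e [set A : {set 'I_n} | (#|A| == r) && (c A == col)].

From mathcomp Require Import all_boot.
From mathcomp Require Import zify.

(* Identify K_n with the first n vertices of K_(n + r - 2) and let S be the
   remaining r - 2 vertices.  Colour each pair {a, b} of K_n with the colour of
   the r-set S + {a, b}; this gives a monochromatic extension F of G - v.
   Send v to a vertex of S and every other vertex x of G to its copy in F.
   An edge xy of G avoiding v becomes the r-set S + {x, y}, and an edge vq
   becomes S + {q, r_q}, where q r_q is the edge of F added for q.  These
   r-sets all contain S, hence the image of v, and are pairwise distinct because the
   corresponding edges of F are. *)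

Lemma upair_eq_sym (A : Type) (a b c d : A) :
  upair_eq a b c d -> upair_eq c d a b.
Proof. by case=> [[-> ->]|[-> ->]]; [left|right]. Qed.

Lemma upair_eq_swapl (A : Type) (a b c d : A) :
  upair_eq a b c d -> upair_eq b a c d.
Proof. by case=> [[-> ->]|[-> ->]]; [right|left]. Qed.

Lemma upair_eq_set2 (V : finType) (a b c d : V) :
  [set a; b] = [set c; d] -> upair_eq a b c d.
Proof.
move=> eq_ab_cd.
have : a \in [set c; d] by rewrite -eq_ab_cd set21.
have : b \in [set c; d] by rewrite -eq_ab_cd set22.
have : c \in [set a; b] by rewrite eq_ab_cd set21.
have : d \in [set a; b] by rewrite eq_ab_cd set22.
by rewrite !inE => /orP[]/eqP ? /orP[]/eqP ? /orP[]/eqP ? /orP[]/eqP ?;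
  subst; rewrite /upair_eq; tauto.
Qed.

Section Padding.

Context {n N : nat} (le_nN : n <= N).

Definition pad_ord : 'I_n -> 'I_N := widen_ord le_nN.

Definition padding : {set 'I_N} := ~: [set pad_ord i | i in 'I_n].

Definition pad_set (A : {set 'I_n}) : {set 'I_N} := padding :|: pad_ord @: A.

Lemma pad_ord_inj : injective pad_ord.
Proof. by move=> i j /(congr1 val) eq_ij; apply: val_inj. Qed.

Lemma pad_ord_notin_padding i : pad_ord i \notin padding.
Proof. by rewrite inE negbK imset_f. Qed.

Lemma card_padding : #|padding| = N - n.
Proof.
have := cardsC [set pad_ord i | i in 'I_n].
rewrite card_imset; last exact: pad_ord_inj.
rewrite -/padding !card_ord.
by move=> /(congr1 (subn^~ n)); rewrite addKn.
Qed.

Lemma padding_sub_pad_set A : padding \subset pad_set A.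
Proof. exact: subsetUl. Qed.

Lemma mem_pad_set A i : (pad_ord i \in pad_set A) = (i \in A).
Proof.
by rewrite inE (negbTE (pad_ord_notin_padding i)) (mem_imset _ _ pad_ord_inj).
Qed.

Lemma pad_set_inj : injective pad_set.
Proof. by move=> A B eqAB; apply/setP => i; rewrite -!mem_pad_set eqAB. Qed.

Lemma card_pad_set A : #|pad_set A| = N - n + #|A|.
Proof.
have disj : [disjoint padding & pad_ord @: A].
  rewrite disjoint_sym disjoints_subset /padding setCK.
  by apply/subsetP => _ /imsetP[i _ ->]; exact: imset_f.
rewrite /pad_set cardsU (disjoint_setI0 disj) cards0 subn0 card_padding.
by rewrite card_imset //; exact: pad_ord_inj.
Qed.

End Padding.

Section BergeCopy.

Context {T : finType} (e : rel T) (v : T) {F : finType} (f : rel F).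
Variables (iota rr : T -> F).
Hypotheses (e_sym : symmetric e) (e_irr : irreflexive e).
Hypothesis iota_inj : {in [pred x | x != v] &, injective iota}.
Hypothesis rr_not_loop : forall q, e v q -> rr q <> iota q.
Hypothesis rr_not_old :
  forall q, e v q -> ~ exists y, [/\ y != v, e q y & rr q = iota y].
Hypothesis rr_distinct : forall q q', e v q -> e v q' -> q <> q' ->
  ~ upair_eq (iota q) (rr q) (iota q') (rr q').
Hypothesis f_edges : forall a b : F, f a b <->
  ((exists x y, [/\ x != v, y != v, e x y & upair_eq a b (iota x) (iota y)]) \/
   (exists2 q, e v q & upair_eq a b (iota q) (rr q))).

(* The edge of F standing for the edge xy of G: xy itself if it avoids v,
   and the added edge q r_q if it is vq. *)
Definition ext_end x y : F := if x == v then rr y else iota x.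

Definition ext_edge x y : {set F} := [set ext_end x y; ext_end y x].

Lemma ext_edgeC x y : ext_edge x y = ext_edge y x.
Proof. exact: setUC. Qed.

Lemma neighbour_neq {q} : e v q -> q != v.
Proof. by apply: contraTneq => ->; rewrite e_irr. Qed.

Lemma ext_end_old x y : x != v -> ext_end x y = iota x.
Proof. by rewrite /ext_end => /negbTE->. Qed.

Lemma ext_end_new y : ext_end v y = rr y.
Proof. by rewrite /ext_end eqxx. Qed.

Lemma ext_end_edge x y : e x y -> f (ext_end x y) (ext_end y x).
Proof.
move=> exy; apply/f_edges; rewrite /upair_eq.
have [xv | xv] := eqVneq x v.
  subst x; rewrite ext_end_new ext_end_old ?(neighbour_neq exy) //.
  by right; exists y; last right.
rewrite ext_end_old //; have [yv | yv] := eqVneq y v.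
  subst y; rewrite ext_end_new; rewrite e_sym in exy.
  by right; exists x; last left.
by rewrite ext_end_old //; left; exists x, y; split => //; left.
Qed.

Lemma ext_end_neq x y : e x y -> ext_end x y != ext_end y x.
Proof.
move=> exy; have [xv | xv] := eqVneq x v.
  subst x; rewrite ext_end_new ext_end_old ?(neighbour_neq exy) //.
  by apply/eqP; exact: rr_not_loop.
rewrite ext_end_old //; have [yv | yv] := eqVneq y v.
  subst y; rewrite ext_end_new; rewrite e_sym in exy.
  by apply/eqP => /esym; exact: rr_not_loop.
by rewrite ext_end_old //; apply: contraTneq exy => /iota_inj-> //; rewrite e_irr.
Qed.

Lemma new_edge_inj q q' : e v q -> e v q' ->
  [set iota q; rr q] = [set iota q'; rr q'] -> q = q'.
Proof.
move=> evq evq' /upair_eq_set2 eq_qq'.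
have [// | neq_qq'] := eqVneq q q'.
by case: (rr_distinct q q' evq evq' _ eq_qq'); apply/eqP.
Qed.

Lemma old_new_edge_neq x y q : x != v -> y != v -> e x y -> e v q ->
  [set iota x; iota y] != [set iota q; rr q].
Proof.
move=> xv yv exy evq; apply/eqP => /upair_eq_set2 [[eq_xq eq_yr] | [eq_xr eq_yq]].
  move/(iota_inj _ _ xv (neighbour_neq evq)): eq_xq => eq_xq; subst x.
  by apply: (rr_not_old _ evq); exists y.
move/(iota_inj _ _ yv (neighbour_neq evq)): eq_yq => eq_yq; subst y.
by apply: (rr_not_old _ evq); exists x; rewrite 1?e_sym.
Qed.

Lemma old_edge_inj x y x' y' : x != v -> y != v -> x' != v -> y' != v ->
  [set iota x; iota y] = [set iota x'; iota y'] -> upair_eq x y x' y'.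
Proof.
by move=> xv yv x'v y'v /upair_eq_set2 [[/iota_inj-> // /iota_inj-> //] |
  [/iota_inj-> // /iota_inj-> //]]; [left | right].
Qed.

Lemma ext_edge_inj x y x' y' : e x y -> e x' y' ->
  ext_edge x y = ext_edge x' y' -> upair_eq x y x' y'.
Proof.
(* Both edges may be oriented so that v, if present, is the first endpoint. *)
wlog y'v : x' y' / y' != v => [wlog_y' exy ex'y' eq_edges | ].
  have [y'v | y'v] := eqVneq y' v; last exact: wlog_y' y'v exy ex'y' eq_edges.
  subst y'; rewrite e_sym in ex'y'; apply/upair_eq_sym/upair_eq_swapl/upair_eq_sym.
  apply: wlog_y' => //; first exact: neighbour_neq.
  by rewrite eq_edges ext_edgeC.
wlog yv : x y / y != v => [wlog_y exy ex'y' eq_edges | ].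
  have [yv | yv] := eqVneq y v; last exact: wlog_y yv exy ex'y' eq_edges.
  subst y; rewrite e_sym in exy; apply/upair_eq_swapl.
  apply: wlog_y => //; first exact: neighbour_neq.
  by rewrite ext_edgeC.
rewrite /ext_edge (ext_end_old _ _ yv) (ext_end_old _ _ y'v).
have [-> | xv] := eqVneq x v; have [-> | x'v] := eqVneq x' v => exy ex'y'.
- by rewrite !ext_end_new !(setUC [set rr _]) => /new_edge_inj-> //; left.
- rewrite ext_end_new !ext_end_old // setUC => /esym/eqP.
  by rewrite (negbTE (old_new_edge_neq _ _ _ x'v y'v ex'y' exy)).
- rewrite ext_end_new !ext_end_old // [RHS]setUC => /eqP.
  by rewrite (negbTE (old_new_edge_neq _ _ _ xv yv exy ex'y')).
- by rewrite !ext_end_old //; exact: old_edge_inj.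
Qed.

Context {n N : nat} (le_nN : n <= N) (phiF : F -> 'I_n) (s0 : 'I_N).
Hypotheses (phiF_inj : injective phiF) (s0_padding : s0 \in padding le_nN).

Definition berge_vertex x : 'I_N :=
  if x == v then s0 else pad_ord le_nN (phiF (iota x)).

Definition berge_edge x y : {set 'I_N} := pad_set le_nN (phiF @: ext_edge x y).

Lemma berge_vertex_inj : injective berge_vertex.
Proof.
have s0_new i : s0 != pad_ord le_nN i.
  by apply: contraTneq s0_padding => ->; exact: pad_ord_notin_padding.
move=> x y; rewrite /berge_vertex.
have [xv | xv] := eqVneq x v; have [yv | yv] := eqVneq y v.
- by rewrite xv yv.
- by move/eqP; rewrite (negbTE (s0_new _)).
- by move/esym/eqP; rewrite (negbTE (s0_new _)).
- by move/pad_ord_inj/phiF_inj/iota_inj; apply.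
Qed.

Lemma berge_vertex_in_edge x y : e x y -> berge_vertex x \in berge_edge x y.
Proof.
move=> exy; rewrite /berge_vertex; have [xv | xv] := eqVneq x v.
  exact: subsetP (padding_sub_pad_set _ _) _ s0_padding.
by rewrite mem_pad_set (mem_imset _ _ phiF_inj) -(ext_end_old x y xv) set21.
Qed.

Lemma card_berge_edge x y : e x y -> #|berge_edge x y| = N - n + 2.
Proof.
by move=> exy; rewrite card_pad_set (card_imset _ phiF_inj) cards2 ext_end_neq.
Qed.

Lemma berge_edge_inj x y x' y' : e x y -> e x' y' ->
  berge_edge x y = berge_edge x' y' -> upair_eq x y x' y'.
Proof.
by move=> exy ex'y' /pad_set_inj /(imset_inj phiF_inj); exact: ext_edge_inj.
Qed.

Context {K : eqType} (c : {set 'I_N} -> K) (col : K).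
Hypothesis mono_F :
  forall a b, f a b -> c (pad_set le_nN [set phiF a; phiF b]) = col.

Lemma berge_of_extension :
  is_berge e [set A : {set 'I_N} | (#|A| == N - n + 2) && (c A == col)].
Proof.
exists berge_vertex, berge_edge; split; first exact: berge_vertex_inj.
split; last exact: berge_edge_inj.
move=> x y exy; split.
- rewrite inE card_berge_edge // eqxx /=.
  by rewrite /berge_edge imsetU1 imset_set1 mono_F //; exact: ext_end_edge.
- exact: berge_vertex_in_edge.
- by rewrite /berge_edge ext_edgeC; apply: berge_vertex_in_edge; rewrite e_sym.
Qed.

End BergeCopy.

Theorem theorem2 (T : finType) (e : rel T) (e_sym : symmetric e)
    (e_irr : irreflexive e) (v : T) (k r : nat) (hk : 2 <= k) (hr : 3 <= r)
    (n : nat) :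
  ramsey_ext_prop e v k n -> ramsey_berge_prop e r k (n + r - 2).
Proof.
move=> ramsey_n c; have le_nN : n <= n + r - 2 by lia.
have [col [F [f [ext_F [phiF [phiF_inj mono_F]]]]]] :=
  ramsey_n (fun A => c (pad_set le_nN A)).
have [s0 s0_padding] : exists s0, s0 \in padding le_nN.
  by apply/set0Pn; rewrite -card_gt0 card_padding; lia.
case: ext_F => iota [rr [iota_inj [_ [rr_not_loop [rr_not_old [rr_distinct f_edges]]]]]].
(* r occurs in the type 'I_(n + r - 2), so only the cardinality is rewritten. *)
have card_r : n + r - 2 - n + 2 = r by lia.
exists col; suff : is_berge e [set A : {set 'I_(n + r - 2)} |
  (#|A| == n + r - 2 - n + 2) && (c A == col)] by rewrite card_r.
exact: (berge_of_extension e v f iota rr e_sym e_irr iota_inj rr_not_loop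
  rr_not_old rr_distinct f_edges le_nN phiF s0 phiF_inj s0_padding c col mono_F).
Qed.
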